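(* For each $h\in[H]$ there exist maps $\zeta_h,\chi_h:\mathcal M\to\mathbb R^{L_h/|\mathcal O|}$ such that for all $M,M'\in\mathcal M$, $\mathcal W_F(M,M',h)=\langle\zeta_h(M),\chi_h(M')\rangle$, and $\|\zeta_h(M)\|_2\|\chi_h(M')\|_2\le O(L_h/K)$.
   Context: Factored MDP setting: $\mathcal O$ finite, $\mathcal X=[H]\times\mathcal O^d$ layered by time, $|\mathcal A|=K$; known parent sets $\mathrm{pa}_i\subseteq[d]$; transitions $P(x'|x,a)=\prod_{i=1}^dP^{(i)}[x'[i]\mid x[\mathrm{pa}_i],a,h]$ for $x\in\mathcal X_h$; known reward $R^\star$ shared by all models; $\mathcal M$ is the set of all models with reward $R^\star$ and transitions factorizing with these parents, and the true model $M^\star\in\mathcal M$. $L_h=\sum_{i=1}^dK|\mathcal O|^{1+|\mathrm{pa}_i|}$. For a model $M$, $\pi_M$ is its greedy optimal policy; $x_h\sim\pi$ is the step-$h$ context when running $\pi$ in the true MDP; $(r,x')\sim M_h$ means $r\sim R^\star(x_h,a_h)$, $x'\sim P(x_h,a_h)$. Test class $\mathcal F=\{g_1+\dots+g_d:g_i\in\mathcal G_i\}$, $\mathcal G_i$ the set of all $\{-1,1\}$-valued functions of $(x,a,r,x')$ depending only on $(x[\mathrm{pa}_i],a,h,x'[i])$. $\mathcal W_F(M,M',h)=\max_{f\in\mathcal F}\mathbb E_{x_h\sim\pi_M,a_h\sim U(\mathcal A)}[\mathbb E_{(r,x')\sim M'_h}f(x_h,a_h,r,x')-\mathbb E_{(r,x')\sim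 M^\star_h}f(x_h,a_h,r,x')]$. *)

From HB Require Import structures.
From mathcomp Require Import all_boot all_order all_algebra.
From mathcomp Require Import boolp classical_sets reals.
Set Implicit Arguments. Unset Strict Implicit. Unset Printing Implicit Defensive.
Import Order.TTheory GRing.Theory Num.Theory.
Local Open Scope ring_scope.
Local Open Scope classical_set_scope.

(* Factored MDP with layers h = 0, ..., H-1 (0-indexed version of [H]).
   A context at layer h is (h, x) with x : O^d, represented by x : state and
   the layer index h kept separately. *)
Section FMDP.
Variables (R : realType) (O A : finType) (d : nat) (pa : 'I_d -> {set 'I_d}).

Definition state := {ffun 'I_d -> O}.

(* A model's transition factors: M h i x a o = P^(i)[o | x[pa_i], a, h]. *)
Definition model := nat -> 'I_d -> state -> A -> O -> R.

Definition policy := nat -> state -> A.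

Definition dep_pa (i : 'I_d) (T : Type) (f : state -> T) : Prop :=
  forall x y : state, (forall j, j \in pa i -> x j = y j) -> f x = f y.

(* Membership in the model class \mathcal M (rewards are the shared R^star). *)
Definition in_class (M : model) : Prop :=
  forall (h : nat) (i : 'I_d) (a : A),
    (forall o, dep_pa i (fun x => M h i x a o)) /\
    (forall x, (forall o, 0 <= M h i x a o) /\ \sum_(o : O) M h i x a o = 1).

Definition Pfull (M : model) (h : nat) (x : state) (a : A) (x' : state) : R :=
  \prod_(i < d) M h i x a (x' i).

Definition Lh : nat := \sum_(i < d) #|A| * #|O| ^ (1 + #|pa i|).

Variables (H : nat) (rbar : nat -> state -> A -> R).
(* rbar h x a = mean of the known reward distribution R^star(x, a) at layer h. *)

Fixpoint Vrem (M : model) (n h : nat) (x : state) : R :=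
  match n with
  | 0 => 0
  | n'.+1 => sup (range (fun a : A =>
        rbar h x a + \sum_(x' : state) Pfull M h x a x' * Vrem M n' h.+1 x'))
  end.

Definition Vopt (M : model) (h : nat) (x : state) : R := Vrem M (H - h) h x.

Definition Qopt (M : model) (h : nat) (x : state) (a : A) : R :=
  rbar h x a + \sum_(x' : state) Pfull M h x a x' * Vopt M h.+1 x'.

Definition greedy_opt (M : model) (pi : policy) : Prop :=
  forall h, (h < H)%N -> forall (x : state) (a : A), Qopt M h x a <= Qopt M h x (pi h x).

Variables (Mstar : model) (d0 : state -> R).

Fixpoint occ (pi : policy) (h : nat) : state -> R :=
  match h with
  | 0 => d0
  | h'.+1 => fun x' => \sum_(x : state) occ pi h' x * Pfull Mstar h' x (pi h' x) x'
  end.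

(* Test functions: (g_1, ..., g_d), g_i : (x, a, x'[i]) -> {-1,1}, coded by bool. *)
Definition testfun := {ffun 'I_d -> {ffun (state * A * O) -> bool}}.

Definition in_F (G : testfun) : Prop :=
  forall (i : 'I_d) (a : A) (o : O), dep_pa i (fun x => G i (x, a, o)).

Definition sgn (b : bool) : R := if b then 1 else -1.

(* f(x, a, r, x') = sum_i g_i(x[pa_i], a, h, x'[i])  (independent of r). *)
Definition fval (G : testfun) (x : state) (a : A) (x' : state) : R :=
  \sum_(i < d) sgn (G i (x, a, x' i)).

Definition gap (pi : policy) (M' : model) (h : nat) (G : testfun) : R :=
  \sum_(x : state) \sum_(a : A) occ pi h x * (#|A|%:R)^-1 *
    (\sum_(x' : state) Pfull M' h x a x' * fval G x a x'
     - \sum_(x' : state) Pfull Mstar h x a x' * fval G x a x').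

(* W_F(M, M', h), with pi = pi_M. *)
Definition WF (pi : policy) (M' : model) (h : nat) : R :=
  sup [set gap pi M' h G | G in [set G | in_F G]].

End FMDP.

Definition dotv (R : realType) n (u v : 'rV[R]_n) : R := \sum_(j < n) u 0 j * v 0 j.
Definition norm2 (R : realType) n (u : 'rV[R]_n) : R := Num.sqrt (\sum_(j < n) u 0 j ^+ 2).

From HB Require Import structures.
From mathcomp Require Import all_boot all_order all_algebra.
From mathcomp Require Import boolp classical_sets reals.
Set Implicit Arguments. Unset Strict Implicit. Unset Printing Implicit Defensive.
Import Order.TTheory GRing.Theory Num.Theory.
Local Open Scope ring_scope.

(* Since the kernel is a product of factor kernels, the expectation of a test
   function [sum_i g_i] only involves the factor distributions, so the gap of a
   test function is an occupancy-weighted sum of [(M'_i - M*_i) g_i].  It is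
   maximised by taking for [g_i] the sign of [M'_i - M*_i], which is again a
   function of the parents: [W_F(M, M', h)] is [1/K] times the occupancy-weighted
   sum over [(x, a, i)] of the L1 distances [|M'_i(.|x,a) - M*_i(.|x,a)|_1].
   These distances only depend on [(i, a, x[pa_i])], and there are [n = L_h/|O|]
   such triples; grouping the sum by them makes [W_F] an inner product of the
   marginal occupancies divided by [K] (entries at most [1/K]) with the L1
   distances (entries at most [2]).  The norms are then at most [sqrt n / K] and
   [2 sqrt n], whose product is [2 n / K <= 2 L_h / K]. *)

Lemma sup_max (R : realType) (E : set R) (x : R) :
  E x -> ubound E x -> sup E = x.
Proof.
move=> Ex ubx; apply/eqP; rewrite eq_le ge_sup //=; last by exists x.
by apply: sup_upper_bound => //; split; exists x.
Qed.

Lemma sum_l1_le2 (R : numDomainType) (T : finType) (p q : T -> R) :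
  (forall t, 0 <= p t) -> (forall t, 0 <= q t) ->
  \sum_t p t = 1 -> \sum_t q t = 1 -> \sum_t `|p t - q t| <= 2.
Proof.
move=> p_ge0 q_ge0 p_sum1 q_sum1.
apply: le_trans (_ : \sum_t (p t + q t) <= 2); last by rewrite big_split /= p_sum1 q_sum1.
by apply: ler_sum => t _; rewrite (le_trans (ler_normB _ _)) // !ger0_norm.
Qed.

Section ProductSums.
Variables (R : comPzRingType) (I O : finType) (p : I -> O -> R).
Hypothesis p_sum1 : forall i, \sum_o p i o = 1.

Lemma sum_prod_ffun1 : \sum_(x : {ffun I -> O}) \prod_i p i (x i) = 1.
Proof. by rewrite -bigA_distr_bigA big1. Qed.

Lemma sum_prod_ffun_marginal (i : I) (f : O -> R) :
  \sum_(x : {ffun I -> O}) (\prod_j p j (x j)) * f (x i) = \sum_o p i o * f o.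
Proof.
pose q j o := if j == i then p j o * f o else p j o.
transitivity (\sum_(x : {ffun I -> O}) \prod_j q j (x j)).
  apply: eq_bigr => x _; rewrite (bigD1 i) //= [RHS](bigD1 i) //= /q eqxx.
  by rewrite mulrAC; congr (_ * _); apply: eq_bigr => j ji; rewrite (negbTE ji).
rewrite -bigA_distr_bigA (bigD1 i) //= [X in _ * X]big1 ?mulr1 => [|j ji].
  by apply: eq_bigr => o _; rewrite /q eqxx.
by rewrite /q (negbTE ji) p_sum1.
Qed.

End ProductSums.

Section ModelClass.
Variables (R : realType) (O A : finType) (d : nat) (pa : 'I_d -> {set 'I_d}).
Variable M : model R O A d.
Hypothesis M_in : in_class pa M.

Lemma in_class_dep h i a o : dep_pa pa i (fun x => M h i x a o).
Proof. exact: (proj1 (M_in h i a)). Qed.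

Lemma in_class_ge0 h i x a o : 0 <= M h i x a o.
Proof. exact: (proj1 (proj2 (M_in h i a) x)). Qed.

Lemma in_class_sum1 h i x a : \sum_o M h i x a o = 1.
Proof. exact: (proj2 (proj2 (M_in h i a) x)). Qed.

Lemma sum_Pfull h x a : \sum_x' Pfull M h x a x' = 1.
Proof. exact: sum_prod_ffun1 (fun i => in_class_sum1 h i x a). Qed.

Lemma sum_Pfull_fval h x a (G : testfun O A d) :
  \sum_x' Pfull M h x a x' * fval R G x a x' =
  \sum_i \sum_o M h i x a o * sgn R (G i (x, a, o)).
Proof.
under eq_bigr do rewrite /fval mulr_sumr.
rewrite exchange_big; apply: eq_bigr => i _ /=.
exact: sum_prod_ffun_marginal (fun j => in_class_sum1 h j x a) _ _.
Qed.

End ModelClass.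

Section Occupancy.
Variables (R : realType) (O A : finType) (d : nat) (pa : 'I_d -> {set 'I_d}).
Variables (Mstar : model R O A d) (d0 : state O d -> R).
Hypothesis Mstar_in : in_class pa Mstar.

Lemma occ_ge0 pi h x : (forall x, 0 <= d0 x) -> 0 <= occ Mstar d0 pi h x.
Proof.
move=> d0_ge0; elim: h x => [|h IH] x //=.
apply: sumr_ge0 => y _; rewrite mulr_ge0 // prodr_ge0 // => i _.
exact: (in_class_ge0 Mstar_in h i y).
Qed.

Lemma occ_sum1 pi h : \sum_x d0 x = 1 -> \sum_x occ Mstar d0 pi h x = 1.
Proof.
move=> d0_sum1; elim: h => [|h IH] //=.
rewrite exchange_big -[RHS]IH; apply: eq_bigr => x _ /=.
by rewrite -mulr_sumr (sum_Pfull Mstar_in) mulr1.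
Qed.

End Occupancy.

Lemma mul_sgn_le_norm (R : realType) (c : R) (b : bool) : c * sgn R b <= `|c|.
Proof. by case: b; rewrite /sgn ?mulr1 ?mulrN1 ?ler_norm // -normrN ler_norm. Qed.

Lemma mul_sgn_ge0E (R : realType) (c : R) : c * sgn R (0 <= c) = `|c|.
Proof.
rewrite /sgn; have [c_ge0|c_lt0] := lerP 0 c; first by rewrite mulr1 ger0_norm.
by rewrite mulrN1 ltr0_norm.
Qed.

Definition factor_l1 (R : realType) (O A : finType) (d : nat) (M M' : model R O A d)
    h i x a : R :=
  \sum_o `|M' h i x a o - M h i x a o|.

Section FactorL1.
Variables (R : realType) (O A : finType) (d : nat) (pa : 'I_d -> {set 'I_d}).
Variables (M M' : model R O A d).
Hypotheses (M_in : in_class pa M) (M'_in : in_class pa M').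

Lemma factor_l1_dep h i a : dep_pa pa i (fun x => factor_l1 M M' h i x a).
Proof.
move=> x y xy; apply: eq_bigr => o _.
by rewrite (in_class_dep M_in h a o xy) (in_class_dep M'_in h a o xy).
Qed.

Lemma factor_l1_le2 h i x a : factor_l1 M M' h i x a <= 2.
Proof.
by apply: sum_l1_le2 => *;
  rewrite ?(in_class_ge0 M_in, in_class_ge0 M'_in, in_class_sum1 M_in, in_class_sum1 M'_in).
Qed.

End FactorL1.

Section Discrepancy.
Variables (R : realType) (O A : finType) (d : nat) (pa : 'I_d -> {set 'I_d}).
Variables (Mstar M' : model R O A d) (d0 : state O d -> R) (pi : policy O A d) (h : nat).
Hypotheses (Mstar_in : in_class pa Mstar) (M'_in : in_class pa M').

Let w x : R := occ Mstar d0 pi h x * (#|A|%:R)^-1.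

Lemma gap_factorE (G : testfun O A d) :
  gap Mstar d0 pi M' h G = \sum_x \sum_a w x *
    \sum_i \sum_o (M' h i x a o - Mstar h i x a o) * sgn R (G i (x, a, o)).
Proof.
apply: eq_bigr => x _; apply: eq_bigr => a _; congr (_ * _).
rewrite (sum_Pfull_fval M'_in) (sum_Pfull_fval Mstar_in) -sumrB.
by apply: eq_bigr => i _; rewrite -sumrB; apply: eq_bigr => o _; rewrite mulrBl.
Qed.

Definition sign_test : testfun O A d :=
  [ffun i => [ffun t => 0 <= M' h i t.1.1 t.1.2 t.2 - Mstar h i t.1.1 t.1.2 t.2]].

Lemma sign_test_in_F : in_F pa sign_test.
Proof.
move=> i a o x y xy; rewrite !ffunE /=.
by rewrite (in_class_dep M'_in h a o xy) (in_class_dep Mstar_in h a o xy).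
Qed.

Lemma WF_factor_l1E : (forall x, 0 <= d0 x) ->
  WF pa Mstar d0 pi M' h = \sum_x \sum_a w x * \sum_i factor_l1 Mstar M' h i x a.
Proof.
move=> d0_ge0; apply: sup_max.
  exists sign_test; first exact: sign_test_in_F.
  rewrite gap_factorE; apply: eq_bigr => x _; apply: eq_bigr => a _; congr (_ * _).
  by apply: eq_bigr => i _; apply: eq_bigr => o _; rewrite !ffunE mul_sgn_ge0E.
move=> _ [G _ <-]; rewrite gap_factorE.
apply: ler_sum => x _; apply: ler_sum => a _.
rewrite ler_wpM2l ?mulr_ge0 ?invr_ge0 ?(occ_ge0 Mstar_in) //.
by apply: ler_sum => i _; apply: ler_sum => o _; exact: mul_sgn_le_norm.
Qed.

End Discrepancy.

Section Features.
Variables (O A : finType) (d : nat) (pa : 'I_d -> {set 'I_d}).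

Definition parent (i : 'I_d) : finType := {j : 'I_d | j \in pa i}.
Definition parent_conf (i : 'I_d) : finType := {ffun parent i -> O}.
Definition feature : finType := {i : 'I_d & (A * parent_conf i)%type}.

Definition restrict i (x : state O d) : parent_conf i := [ffun j => x (val j)].

Definition extend (o0 : O) i (u : parent_conf i) : state O d :=
  [ffun j => if insub j is Some s then u s else o0].

Lemma extend_restrict o0 i x j : j \in pa i -> extend o0 (restrict i x) j = x j.
Proof. by move=> j_pa; rewrite ffunE insubT /= ffunE. Qed.

Lemma card_feature : #|feature| = (\sum_i #|A| * #|O| ^ #|pa i|)%N.
Proof.
rewrite -sum1_card -(sig_big_dep xpredT (fun _ => xpredT) (fun _ _ => 1%N)) /=.
apply: eq_bigr => i _; rewrite sum1_card card_prod card_ffun card_sig.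
by congr (_ * _ ^ _)%N; apply: eq_card.
Qed.

Lemma Lh_card_feature : Lh O A pa = (#|feature| * #|O|)%N.
Proof.
rewrite card_feature big_distrl; apply: eq_bigr => i _ /=.
by rewrite add1n expnS mulnCA mulnC.
Qed.

Section Marginal.
Variables (R : numDomainType) (w : state O d -> R).

Definition marginal i (u : parent_conf i) : R := \sum_(x | restrict i x == u) w x.

Lemma marginal_ge0 i (u : parent_conf i) : (forall x, 0 <= w x) -> 0 <= marginal u.
Proof. by move=> w_ge0; apply: sumr_ge0. Qed.

Lemma marginal_le_sum i (u : parent_conf i) :
  (forall x, 0 <= w x) -> marginal u <= \sum_x w x.
Proof.
move=> w_ge0; rewrite [leRHS](bigID (fun x => restrict i x == u)) /= lerDl.
exact: sumr_ge0.
Qed.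

Lemma sum_feature_marginal o0 (D : 'I_d -> state O d -> A -> R) :
  (forall i a, dep_pa pa i (D i ^~ a)) ->
  \sum_x \sum_a w x * \sum_i D i x a =
  \sum_(t : feature) marginal (tagged t).2 * D (tag t) (extend o0 (tagged t).2) (tagged t).1.
Proof.
move=> D_dep; rewrite -(sig_big_dep xpredT (fun _ => xpredT)
  (fun i (p : A * parent_conf i) => marginal p.2 * D i (extend o0 p.2) p.1)) /=.
under eq_bigr do under eq_bigr do rewrite mulr_sumr.
under eq_bigr do rewrite exchange_big /=.
rewrite exchange_big; apply: eq_bigr => i _ /=.
rewrite exchange_big -(pair_big xpredT xpredT
  (fun a (u : parent_conf i) => marginal u * D i (extend o0 u) a)) /=.
apply: eq_bigr => a _.
rewrite (partition_big (restrict i) xpredT) //=; apply: eq_bigr => u _.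
rewrite mulr_suml; apply: eq_bigr => x /eqP <-; congr (_ * _).
by apply: D_dep => j j_pa; rewrite extend_restrict.
Qed.

End Marginal.

End Features.

Definition fun_row (R : Type) (T : finType) n (e : #|T| = n) (f : T -> R) : 'rV[R]_n :=
  \row_j f (enum_val (cast_ord (esym e) j)).

Lemma dotv_fun_row (R : realType) (T : finType) n (e : #|T| = n) (f g : T -> R) :
  dotv (fun_row e f) (fun_row e g) = \sum_t f t * g t.
Proof.
case: n / e; rewrite /dotv; under eq_bigr do rewrite !mxE cast_ord_id.
rewrite (reindex enum_rank) /=; last exact/onW_bij/enum_rank_bij.
by apply: eq_bigr => t _; rewrite enum_rankK.
Qed.

Lemma norm2_le (R : realType) n (u : 'rV[R]_n) (c : R) :
  0 <= c -> (forall j, `|u 0 j| <= c) -> norm2 u <= c * Num.sqrt n%:R.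
Proof.
move=> c_ge0 u_le; rewrite /norm2 -(ger0_norm c_ge0) -sqrtr_sqr -sqrtrM ?sqr_ge0 //.
rewrite ler_sqrt ?mulr_ge0 ?sqr_ge0 // mulr_natr -[X in _ *+ X]card_ord -sumr_const.
apply: ler_sum => j _.
by rewrite -real_normK ?num_real // ler_sqr ?nnegrE ?normr_ge0.
Qed.

Lemma norm2_fun_row_le (R : realType) (T : finType) n (e : #|T| = n) (f : T -> R) (c : R) :
  0 <= c -> (forall t, `|f t| <= c) -> norm2 (fun_row e f) <= c * Num.sqrt n%:R.
Proof. by move=> c_ge0 f_le; apply: norm2_le => // j; rewrite mxE. Qed.

Theorem mainTheorem10 (R : realType) :
  exists C : R, 0 < C /\
  forall (O A : finType) (d H : nat) (pa : 'I_d -> {set 'I_d})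
         (rbar : nat -> state O d -> A -> R) (d0 : state O d -> R)
         (Mstar : model R O A d) (pi : model R O A d -> policy O A d),
    (0 < #|O|)%N -> (0 < #|A|)%N ->
    (forall x, 0 <= d0 x) -> \sum_(x : state O d) d0 x = 1 ->
    in_class pa Mstar ->
    (forall M, in_class pa M -> greedy_opt H rbar M (pi M)) ->
    forall h : nat, (h < H)%N ->
    exists zeta chi : model R O A d -> 'rV[R]_(Lh O A pa %/ #|O|),
      forall M M' : model R O A d, in_class pa M -> in_class pa M' ->
        WF pa Mstar d0 (pi M) M' h = dotv (zeta M) (chi M') /\
        norm2 (zeta M) * norm2 (chi M') <= C * ((Lh O A pa)%:R / (#|A|)%:R).
Proof.
exists 2; split=> // O A d H pa rbar d0 Mstar pi O_gt0 A_gt0 d0_ge0 d0_sum1 Mstar_in _ h _.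
have /card_gt0P[o0 _] := O_gt0.
have e : #|feature O A pa| = (Lh O A pa %/ #|O|)%N by rewrite Lh_card_feature mulnK.
pose k : R := #|A|%:R.
pose w M x := occ Mstar d0 (pi M) h x / k.
exists (fun M => fun_row e (fun t => marginal (w M) (tagged t).2)).
exists (fun M' => fun_row e (fun t =>
  factor_l1 Mstar M' h (tag t) (extend o0 (tagged t).2) (tagged t).1)).
move=> M M' M_in M'_in; split.
  rewrite dotv_fun_row (WF_factor_l1E (pi M) h Mstar_in M'_in d0_ge0).
  by apply: sum_feature_marginal => i a; apply: factor_l1_dep.
have k_gt0 : 0 < k by rewrite ltr0n.
have w_ge0 x : 0 <= w M x by rewrite divr_ge0 ?(occ_ge0 Mstar_in) ?ltW.
apply: le_trans (ler_pM (sqrtr_ge0 _) (sqrtr_ge0 _)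
  (norm2_fun_row_le (c := k^-1) e _ _) (norm2_fun_row_le (c := 2) e _ _)) _.
- by rewrite invr_ge0 ltW.
- move=> t; rewrite ger0_norm ?marginal_ge0 //.
  rewrite (le_trans (marginal_le_sum _ w_ge0)) // -mulr_suml.
  by rewrite (occ_sum1 Mstar_in _ _ d0_sum1) mul1r.
- by [].
- by move=> t; rewrite ger0_norm ?sumr_ge0 ?(factor_l1_le2 Mstar_in).
rewrite mulrCA -mulrA -expr2 sqr_sqrtr // ler_pM2l // mulrC ler_pM2r ?invr_gt0 //.
by rewrite ler_nat leq_div.
Qed.
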